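(* Let $\mathcal{L}\subseteq\{w\in\{t,t^{-1}\}^*:\sharp_t(w)-\sharp_{t^{-1}}(w)\ge0\}$ be a regular language. Then there is a constant $K\ge0$ such that for all $w\in\mathcal{L}$ and all $i,j\in\{0,1,\dots,\ell(w)\}$ with $j>i$, one has $f_w(j)>f_w(i)-K$.
   Context: For a word $w$ and a letter $x$, $\sharp_x(w)$ is the number of occurrences of $x$ in $w$, and $\ell(w)$ is the length of $w$. For $w=x_1\cdots x_n\in\{t,t^{-1}\}^*$ with $x_i\in\{t,t^{-1}\}$, define $f_w\colon\{0,1,\dots,n\}\to\mathbb{Z}$ by $f_w(i)=\sharp_t(x_1\cdots x_i)-\sharp_{t^{-1}}(x_1\cdots x_i)$. A regular language is one accepted by a finite state automaton. *)

From HB Require Import structures.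
From mathcomp Require Import all_boot all_order all_algebra.
Set Implicit Arguments. Unset Strict Implicit. Unset Printing Implicit Defensive.
Import Order.TTheory GRing.Theory Num.Theory.

Inductive letter := tt_ | tinv.
Definition letter_eqb (a b : letter) : bool :=
  match a, b with tt_, tt_ | tinv, tinv => true | _, _ => false end.
Lemma letter_eqP : Equality.axiom letter_eqb.
Proof. by case; case; constructor. Qed.
HB.instance Definition _ := hasDecEq.Build letter letter_eqP.

Definition word := seq letter.

Definition nocc (x : letter) (w : word) : nat := count_mem x w.

Definition fw (w : word) (i : nat) : int :=
  (nocc tt_ (take i w))%:Z - (nocc tinv (take i w))%:Z.

Record dfa := DFA {
  dfa_state : finType;
  dfa_start : dfa_state;
  dfa_delta : dfa_state -> letter -> dfa_state;
  dfa_final : pred dfa_state }.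

Definition dfa_accepts (A : dfa) (w : word) : bool :=
  @dfa_final A (foldl (@dfa_delta A) (@dfa_start A) w).

Definition regular (L : word -> Prop) : Prop :=
  exists A : dfa, forall w, L w <-> dfa_accepts A w.

(** Let [N] be the number of states of an automaton for [L].  If the walk
    [f_w] dropped by [N] or more between [i] and [j], then the factor of [w]
    between these positions would pass, in order, through the [N + 1]
    levels [0, -1, ..., -N]; two of them are reached in the same state, so
    the factor between them is a loop of negative drift.  Pumping this loop
    produces accepted words of arbitrarily negative drift, contradicting
    the hypothesis on [L]. *)

From mathcomp Require Import all_boot all_order all_algebra.
From mathcomp Require Import zify.
Set Implicit Arguments. Unset Strict Implicit.
Import Order.TTheory GRing.Theory Num.Theory.
Local Open Scope ring_scope.

Definition drift (v : word) : int := (nocc tt_ v)%:Z - (nocc tinv v)%:Z.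

Lemma drift_cons c v : drift (c :: v) = (if c is tt_ then 1 else -1) + drift v.
Proof. by rewrite /drift /nocc; case: c => /=; lia. Qed.

Lemma drift_cat u v : drift (u ++ v) = drift u + drift v.
Proof. by rewrite /drift /nocc !count_cat !PoszD; lia. Qed.

Lemma drift_flatten_nseq m y : drift (flatten (nseq m y)) = m%:Z * drift y.
Proof.
elim: m => [|m IHm] /=; first by rewrite mul0r.
by rewrite drift_cat IHm -addn1 PoszD mulrDl mul1r addrC.
Qed.

Lemma fwE w n : fw w n = drift (take n w).
Proof. by []. Qed.

Lemma take_cat_drop_take (T : Type) i j (s : seq T) : (i <= j)%N ->
  take j s = take i s ++ drop i (take j s).
Proof. by move=> le_ij; rewrite -{1}(cat_take_drop i (take j s)) take_takel. Qed.

Lemma drift_levels v m : drift v <= - m%:Z ->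
  exists2 p : nat -> nat, {homo p : a b / (a <= b)%N} &
    forall k, (k <= m)%N -> drift (take (p k) v) = - k%:Z.
Proof.
elim: v m => [|c v IHv] m.
  move=> le_m0; exists (fun=> 0%N) => // k le_km.
  by move: le_m0; rewrite take0 /drift /=; lia.
rewrite drift_cons; case: c => [|] le_vm.
- have [p p_homo p_lvl] := IHv m.+1 ltac:(lia).
  exists (fun k => (p k.+1).+1) => [a b le_ab|k le_km]; first exact: p_homo.
  by rewrite take_cons drift_cons p_lvl //; lia.
- case: m le_vm => [|m] le_vm.
    by exists (fun=> 0%N) => // k; rewrite leqn0 => /eqP->.
  have [p p_homo p_lvl] := IHv m ltac:(lia).
  exists (fun k => if k is k'.+1 then (p k').+1 else 0%N).
    by case=> [|a] [|b] //= le_ab; apply: p_homo.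
  case=> [|k] le_km //; rewrite take_cons drift_cons p_lvl //; lia.
Qed.

Section Automaton.

Variable A : dfa.

Local Notation run := (foldl (@dfa_delta A)).

Lemma run_flatten_nseq q y m : run q y = q -> run q (flatten (nseq m y)) = q.
Proof. by move=> loop_y; elim: m => [|m IHm] //=; rewrite foldl_cat loop_y. Qed.

Lemma accepts_pump x y z m : run (run (dfa_start A) x) y = run (dfa_start A) x ->
  dfa_accepts A (x ++ flatten (nseq m y) ++ z) = dfa_accepts A (x ++ y ++ z).
Proof.
by move=> loop_y; rewrite /dfa_accepts !foldl_cat loop_y run_flatten_nseq.
Qed.

(* Pigeonhole on the states reached at the first [#|dfa_state A| + 1] levels. *)
Lemma negative_drift_loop q v : drift v <= - #|dfa_state A|%:Z ->
  exists v1 y v2, [/\ v = v1 ++ y ++ v2, drift y < 0 & run (run q v1) y = run q v1].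
Proof.
set N := #|dfa_state A| => le_vN.
have [p p_homo p_lvl] := drift_levels le_vN.
pose g (k : 'I_N.+1) := run q (take (p k) v).
have /injectivePn [a0 [b0 neq_ab eq_gab]] : ~~ injectiveb g.
  by apply/negP => /injectiveP/leq_card; rewrite card_ord; lia.
have [a [b [lt_ab eq_g]]] : exists a b : 'I_N.+1, (a < b)%N /\ g a = g b.
  case: (ltngtP a0 b0) => [lt_ab|lt_ba|/val_inj eq_ab].
  - by exists a0, b0.
  - by exists b0, a0.
  - by rewrite eq_ab eqxx in neq_ab.
have le_pab : (p a <= p b)%N by apply/p_homo/ltnW.
have split_b := take_cat_drop_take v le_pab.
exists (take (p a) v), (drop (p a) (take (p b) v)), (drop (p b) v); split.
- by rewrite catA -split_b cat_take_drop.
- have := congr1 drift split_b; rewrite drift_cat !p_lvl ?leq_ord //; lia.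
- by rewrite -foldl_cat -split_b.
Qed.

Lemma loop_drift_ge0 x y z :
  (forall w, dfa_accepts A w -> 0 <= drift w) ->
  dfa_accepts A (x ++ y ++ z) -> run (run (dfa_start A) x) y = run (dfa_start A) x ->
  0 <= drift y.
Proof.
move=> drift_ge0 acc loop_y; rewrite leNgt; apply/negP => lt_y0.
have [m lt_m] : exists m : nat, drift x + drift z < m%:Z.
  by exists (absz (drift x + drift z)).+1; lia.
have := drift_ge0 _ (etrans (accepts_pump z m loop_y) acc).
rewrite !drift_cat drift_flatten_nseq.
have : m%:Z * drift y <= - m%:Z by rewrite -mulrN1 ler_wpM2l //; lia.
lia.
Qed.

End Automaton.

Theorem lemma4p4 (L : word -> Prop) (hreg : regular L)
    (hsub : forall w, L w -> (nocc tt_ w)%:Z - (nocc tinv w)%:Z >= 0) :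
  exists K : int, 0 <= K /\
    forall w, L w -> forall i j : nat,
      (i <= size w)%N -> (j <= size w)%N -> (i < j)%N ->
      fw w j > fw w i - K.
Proof.
have [A L_A] := hreg.
have drift_ge0 w : dfa_accepts A w -> 0 <= drift w by move/L_A/hsub.
exists #|dfa_state A|%:Z; split => // w Lw i j _ _ /ltnW le_ij.
rewrite ltNge; apply/negP => drop_ij.
set u := take i w; set v := drop i (take j w).
have split_j : take j w = u ++ v := take_cat_drop_take w le_ij.
have le_vN : drift v <= - #|dfa_state A|%:Z.
  by move: drop_ij; rewrite !fwE split_j -/u drift_cat; lia.
have [v1 [y [v2 [def_v lt_y0 loop_y]]]] :=
  negative_drift_loop (foldl (@dfa_delta A) (dfa_start A) u) le_vN.
have def_w : w = (u ++ v1) ++ y ++ (v2 ++ drop j w).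
  by rewrite -{1}(cat_take_drop j w) split_j def_v -!catA.
have acc_w : dfa_accepts A ((u ++ v1) ++ y ++ (v2 ++ drop j w)).
  by rewrite -def_w; apply/L_A.
have := loop_drift_ge0 drift_ge0 acc_w; rewrite !foldl_cat => /(_ loop_y).
by rewrite leNgt lt_y0.
Qed.
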